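(* Let $h>0$ and $0<\alpha<\pi/8$, and place the target at $g=(0,0)$. Put $t=\dfrac{2h}{\tan(\pi/4-\alpha)}$, $s_p=(-t/2,h)$, $s_q=(t/2,h)$, and $$L=\frac{2h\sin(2\alpha)}{1-\sin(2\alpha)}.$$ Let $D$ be the vertical segment from $(0,0)$ to $(0,-L)$. Then for every camera location $s\in S$ there is a unit vector $u$ such that the wedge $W(s,u)$ contains both $g$ and the whole segment $D$. (Here $L$ equals the length of the vertical diagonal of the intersection of the wedges $W_p\in\mathcal W(g,s_p)$, $W_q\in\mathcal W(g,s_q)$ whose upper boundary rays both pass through $g$.)
   Context: Work in $\mathbb{R}^2$ with coordinates $(x,z)$. The ground line is $G=\{z=0\}$ and the viewing line is $S=\{z=h\}$, $h>0$. Fix $\alpha>0$. For a point $s$ and a unit vector $u$, the wedge $W(s,u)=\{s+rv:\ r\ge 0,\ |v|=1,\ \angle(v,u)\le\alpha\}$ (apex $s$, opening angle $2\alpha$). For a target $g$ and camera location $s$, $\mathcal W(g,s)$ denotes the set of all wedges $W(s,u)$ containing $g$. *)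

From Stdlib Require Import Reals.
Open Scope R_scope.

Definition pt := (R * R)%type.
Definition dot (a b : pt) : R := fst a * fst b + snd a * snd b.
Definition norm (a : pt) : R := sqrt (dot a a).

Definition angle (v u : pt) : R := acos (dot v u / (norm v * norm u)).

Definition in_wedge (alpha : R) (s u p : pt) : Prop :=
  exists (r : R) (v : pt),
    0 <= r /\ norm v = 1 /\ angle v u <= alpha /\
    p = (fst s + r * fst v, snd s + r * snd v).

(** The camera at [s] sees the two endpoints [g = (0,0)] and [(0,-L)] of the
    segment along unit directions [a] and [b].  The choice of [L] is exactly
    what makes [cos angle(a,b) >= cos (2 alpha)] for every [s] on the viewing
    line, and then the wedge around the bisector of [a] and [b] contains the
    whole cone spanned by [a] and [b], hence the whole segment. *)

From Stdlib Require Import Reals Lra Psatz.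
Open Scope R_scope.

Definition vadd (a b : pt) : pt := (fst a + fst b, snd a + snd b).
Definition vscale (c : R) (a : pt) : pt := (c * fst a, c * snd a).
Definition normalize (w : pt) : pt := vscale (/ norm w) w.

Lemma dot_self_ge0 (w : pt) : 0 <= dot w w.
Proof. unfold dot; nra. Qed.

Lemma norm_sqr (w : pt) : norm w * norm w = dot w w.
Proof. exact (sqrt_sqrt _ (dot_self_ge0 w)). Qed.

Lemma norm_gt0 (w : pt) : 0 < dot w w -> 0 < norm w.
Proof. exact (sqrt_lt_R0 _). Qed.

Lemma norm_of_unit (u : pt) : dot u u = 1 -> norm u = 1.
Proof. intros Hu; unfold norm; rewrite Hu; exact sqrt_1. Qed.

Lemma dot_normalize_r (w u : pt) :
  0 < dot u u -> dot w (normalize u) = dot w u / norm u.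
Proof.
  intros Hu; pose proof (norm_gt0 u Hu).
  unfold normalize, vscale, dot; simpl; field; lra.
Qed.

Lemma dot_normalize_self (w : pt) :
  0 < dot w w -> dot (normalize w) (normalize w) = 1.
Proof.
  intros Hw; pose proof (norm_gt0 w Hw) as Hn; pose proof (norm_sqr w) as Hsq.
  unfold normalize, vscale, dot in *; simpl.
  replace (/ norm w * fst w * (/ norm w * fst w) + / norm w * snd w * (/ norm w * snd w))
    with ((fst w * fst w + snd w * snd w) / (norm w * norm w)) by (field; lra).
  rewrite Hsq; field; lra.
Qed.

Lemma vscale_norm_normalize (w : pt) :
  0 < dot w w -> vscale (norm w) (normalize w) = w.
Proof.
  intros Hw; pose proof (norm_gt0 w Hw).
  destruct w as [w1 w2]; unfold normalize, vscale; simpl; f_equal; field; lra.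
Qed.

Lemma vadd_vscale_normalize (A B : pt) (c1 c2 : R) :
  0 < dot A A -> 0 < dot B B ->
  vadd (vscale (c1 * norm A) (normalize A)) (vscale (c2 * norm B) (normalize B))
  = vadd (vscale c1 A) (vscale c2 B).
Proof.
  intros HA HB.
  pose proof (vscale_norm_normalize A HA) as EA; pose proof (vscale_norm_normalize B HB) as EB.
  destruct (normalize A) as [a1 a2], (normalize B) as [b1 b2].
  generalize dependent (norm B); generalize dependent (norm A); intros nA EA nB EB.
  rewrite <- EA, <- EB; unfold vadd, vscale; simpl; f_equal; ring.
Qed.

Lemma dot_vadd_self_unit (a b : pt) :
  dot a a = 1 -> dot b b = 1 -> dot (vadd a b) (vadd a b) = 2 + 2 * dot a b.
Proof. unfold dot, vadd; simpl; intros; nra. Qed.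

Lemma mul_sqrt_le (k X Y : R) :
  0 <= X -> 0 <= k -> 0 <= Y -> k * k * Y <= X * X -> k * sqrt Y <= X.
Proof.
  intros HX Hk HY H.
  pose proof (sqrt_sqrt Y HY); pose proof (sqrt_pos Y).
  destruct (Rle_dec (k * sqrt Y) X) as [|Hlt]; [assumption|].
  apply Rnot_le_lt in Hlt; nra.
Qed.

Lemma acos_le_of_cos_le (al y : R) :
  0 <= al <= PI -> 0 < cos al -> cos al <= y -> acos y <= al.
Proof.
  intros Hal Hc Hy.
  destruct (Rle_dec 1 y) as [H1|H1].
  - (* [acos] is [0] to the right of [1] *)
    unfold acos; destruct (Rle_dec y (-1)); [lra|].
    destruct (Rle_dec 1 y); [lra|contradiction].
  - apply Rnot_lt_le; intros Hlt.
    pose proof (acos_bound y).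
    assert (cos (acos y) < cos al) by (apply cos_decreasing_1; lra).
    rewrite cos_acos in *; lra.
Qed.

Lemma in_wedge_of_cos_le (al : R) (s u w : pt) :
  0 <= al <= PI -> 0 < cos al -> dot u u = 1 -> 0 < dot w w ->
  cos al * norm w <= dot w u -> in_wedge al s u (vadd s w).
Proof.
  intros Hal Hc Hu Hw Hcos.
  pose proof (norm_gt0 w Hw) as Hn.
  exists (norm w), (normalize w); split; [lra|]; split; [|split].
  - exact (norm_of_unit _ (dot_normalize_self w Hw)).
  - unfold angle; rewrite (norm_of_unit _ (dot_normalize_self w Hw)), (norm_of_unit u Hu).
    apply acos_le_of_cos_le; [exact Hal|exact Hc|].
    replace (1 * 1) with 1 by ring; rewrite Rdiv_1_r.
    assert (E : dot (normalize w) u = dot w u / norm w).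
    { unfold normalize, vscale, dot; simpl; field; lra. }
    rewrite E; apply (Rmult_le_reg_r (norm w)); [lra|].
    unfold Rdiv; rewrite Rmult_assoc, Rinv_l, Rmult_1_r by lra; exact Hcos.
  - pose proof (vscale_norm_normalize w Hw) as Ew.
    unfold vscale in Ew; unfold vadd; rewrite <- Ew at 1 2; reflexivity.
Qed.

(* Half-angle formula: [2 ca^2 - 1 <= a.b] says that the angle between [a]
   and [b] is at most twice the angle whose cosine is [ca]. *)
Lemma bisector_cone (ca : R) (a b : pt) (c1 c2 : R) :
  dot a a = 1 -> dot b b = 1 -> 0 < ca -> 2 * ca * ca - 1 <= dot a b ->
  0 <= c1 -> 0 <= c2 ->
  let w := vadd (vscale c1 a) (vscale c2 b) in
  ca * norm w <= dot w (normalize (vadd a b)).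
Proof.
  intros Ha Hb Hca Hab Hc1 Hc2 w.
  set (m := dot a b) in *.
  assert (Hm1 : m <= 1).
  { pose proof (dot_self_ge0 (vadd a (vscale (-1) b))).
    unfold m, dot, vadd, vscale in *; simpl in *; nra. }
  pose proof (dot_vadd_self_unit a b Ha Hb) as Hab2; fold m in Hab2.
  assert (Hwab : dot w (vadd a b) = (c1 + c2) * (1 + m)).
  { unfold w, m, dot, vadd, vscale in *; simpl; nra. }
  assert (Hww : dot w w = c1 * c1 + c2 * c2 + 2 * c1 * c2 * m).
  { unfold w, m, dot, vadd, vscale in *; simpl; nra. }
  assert (Hpos : 0 < dot (vadd a b) (vadd a b)) by nra.
  pose proof (norm_sqr (vadd a b)) as Hn2; pose proof (norm_gt0 _ Hpos) as Hn.
  rewrite dot_normalize_r, Hwab by exact Hpos.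
  apply mul_sqrt_le; [| lra | apply dot_self_ge0 |].
  - unfold Rdiv; apply Rmult_le_pos; [nra | apply Rlt_le, Rinv_0_lt_compat, Hn].
  - replace ((c1 + c2) * (1 + m) / norm (vadd a b) * ((c1 + c2) * (1 + m) / norm (vadd a b)))
      with ((c1 + c2) * (1 + m) * ((c1 + c2) * (1 + m)) / (norm (vadd a b) * norm (vadd a b)))
      by (field; lra).
    rewrite Hn2, Hab2.
    replace ((c1 + c2) * (1 + m) * ((c1 + c2) * (1 + m)) / (2 + 2 * m))
      with ((c1 + c2) * (c1 + c2) * ((1 + m) / 2)) by (field; lra).
    rewrite Hww.
    assert (c1 * c1 + c2 * c2 + 2 * c1 * c2 * m <= (c1 + c2) * (c1 + c2)).
    { assert (0 <= c1 * c2 * (1 - m)) by (apply Rmult_le_pos; nra). nra. }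
    apply Rle_trans with (ca * ca * ((c1 + c2) * (c1 + c2))).
    + apply Rmult_le_compat_l; nra.
    + rewrite (Rmult_comm ((c1 + c2) * (c1 + c2))).
      apply Rmult_le_compat_r; nra.
Qed.

Lemma cos_le_dot_normalize (c : R) (A B : pt) :
  0 < dot A A -> 0 < dot B B -> c * (norm A * norm B) <= dot A B ->
  c <= dot (normalize A) (normalize B).
Proof.
  intros HA HB H; pose proof (norm_gt0 A HA); pose proof (norm_gt0 B HB).
  replace (dot (normalize A) (normalize B)) with (dot A B / (norm A * norm B))
    by (unfold normalize, vscale, dot; simpl; field; lra).
  apply (Rmult_le_reg_r (norm A * norm B)); [nra|].
  unfold Rdiv; rewrite Rmult_assoc, Rinv_l, Rmult_1_r by nra; exact H.
Qed.

(* The hypothesis on [L] turns [(1 - sg^2) L^2] into [4 sg^2 h (h + L)], and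
   then the difference of the squared sides is the square [sg^2 (x^2 - h (h + L))^2]. *)
Lemma sight_lines_cos_ge (h L c sg x : R) :
  0 < h -> 0 <= L -> 0 <= c -> c * c + sg * sg = 1 -> L * (1 - sg) = 2 * h * sg ->
  c * (norm (- x, - h) * norm (- x, - (h + L))) <= dot (- x, - h) (- x, - (h + L)).
Proof.
  intros Hh HL Hc Hcs HLdef.
  unfold norm, dot; simpl.
  rewrite <- sqrt_mult by nra.
  apply mul_sqrt_le; [nra | exact Hc | nra |].
  assert (Hsq : (- x * - x + - h * - (h + L)) * (- x * - x + - h * - (h + L))
                - c * c * ((- x * - x + - h * - h) * (- x * - x + - (h + L) * - (h + L)))
                = sg * sg * ((x * x - h * (h + L)) * (x * x - h * (h + L)))).
  { replace (c * c) with (1 - sg * sg) by lra.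
    apply Rminus_diag_uniq.
    replace (_ - _ - _)
      with (- x * x * (L * (1 - sg) - 2 * h * sg) * ((1 + sg) * L + 2 * sg * h)) by ring.
    rewrite HLdef; ring. }
  assert (0 <= sg * sg * ((x * x - h * (h + L)) * (x * x - h * (h + L)))) by
    (apply Rmult_le_pos; apply Rle_0_sqr).
  lra.
Qed.

Theorem lemma1 (h alpha : R) :
  0 < h -> 0 < alpha < PI / 8 ->
  let L := 2 * h * sin (2 * alpha) / (1 - sin (2 * alpha)) in
  forall s : pt, snd s = h ->
  exists u : pt, norm u = 1 /\
    in_wedge alpha s u (0, 0) /\
    (forall z : R, - L <= z <= 0 -> in_wedge alpha s u (0, z)).
Proof.
  intros Hh [Ha0 Ha8] L [x z0] Hs; simpl in Hs; subst z0.
  pose proof PI_RGT_0.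
  assert (Hc : 0 < cos (2 * alpha)) by (apply cos_gt_0; lra).
  assert (Hsg : 0 < sin (2 * alpha)) by (apply sin_gt_0; lra).
  assert (Hca : 0 < cos alpha) by (apply cos_gt_0; lra).
  pose proof (sin2_cos2 (2 * alpha)) as Hsc; unfold Rsqr in Hsc.
  assert (HLdef : L * (1 - sin (2 * alpha)) = 2 * h * sin (2 * alpha))
    by (unfold L; field; nra).
  assert (HL : 0 < L) by (unfold L; apply Rdiv_lt_0_compat; nra).
  clearbody L.
  set (A := (- x, - h)); set (B := (- x, - (h + L))).
  assert (HA : 0 < dot A A) by (unfold A, dot; simpl; nra).
  assert (HB : 0 < dot B B) by (unfold B, dot; simpl; nra).
  assert (Hab : 2 * cos alpha * cos alpha - 1 <= dot (normalize A) (normalize B)).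
  { rewrite <- cos_2a_cos; apply cos_le_dot_normalize; [exact HA | exact HB |].
    apply (sight_lines_cos_ge h L _ (sin (2 * alpha))); lra. }
  assert (Hu : dot (normalize (vadd (normalize A) (normalize B)))
                   (normalize (vadd (normalize A) (normalize B))) = 1).
  { apply dot_normalize_self; rewrite dot_vadd_self_unit by (apply dot_normalize_self; assumption).
    nra. }
  exists (normalize (vadd (normalize A) (normalize B))).
  assert (Hsegment : forall z, - L <= z <= 0 ->
            in_wedge alpha (x, h) (normalize (vadd (normalize A) (normalize B))) (0, z)).
  { intros z Hz; set (t := - z / L).
    assert (Ht : 0 <= t <= 1).
    { assert (t * L = - z) by (unfold t; field; lra). nra. }
    replace (0, z) with (vadd (x, h) (vadd (vscale (1 - t) A) (vscale t B)))
      by (unfold vadd, vscale, t, A, B; simpl; f_equal; field; lra).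
    rewrite <- (vadd_vscale_normalize A B) by assumption.
    apply in_wedge_of_cos_le; [lra | exact Hca | exact Hu | |].
    - rewrite vadd_vscale_normalize by assumption.
      unfold vadd, vscale, A, B, dot; simpl.
      assert (0 < h + t * L) by nra. nra.
    - apply bisector_cone; try apply dot_normalize_self; try assumption;
        apply Rmult_le_pos; try apply Rlt_le, norm_gt0; lra. }
  split; [exact (norm_of_unit _ Hu) |].
  split; [apply Hsegment; lra | exact Hsegment].
Qed.
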